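(* Let $a>0$ be the absolute constant such that for every $0<\eta\le1/2$ and every $m\le\exp(a\eta^2 d_k)$ there exist unit vectors $u_1,\dots,u_m\in\mathbb{R}^{d_k}$ with $\langle u_i,u_h\rangle\le\eta$ for all $i\ne h$. Fix dimensions $d,d_k>1$, $\rho\ge2$, let $L=e^\rho$, and let $0<\varepsilon\le\varepsilon_0/\sqrt d$ for a sufficiently small absolute constant $\varepsilon_0$. Suppose there is a (possibly randomized) coreset algorithm that, for any input collection of pairs $(K,V)$ with keys $k_i\in\mathbb{R}^{d_k}$, values $v_i\in\mathbb{R}^d$, $\|k_i\|_2,\|v_i\|_2\le1$, produces a sub-collection $(K',V')$ of the input pairs of size $S$ such that for any $q\in\mathbb{R}^{d_k}$ with $\|q\|_2\le\rho$, with constant probability, \[ \|\mathrm{Attn}(q,K,V)-\mathrm{Attn}(q,K',V')\|_2\le\varepsilon. \] Then \[ S=\Omega\!\left(d\cdot\min\{L/(\varepsilon\sqrt d),\;L^2,\;\exp(a d_k/\log^2L)\}\right). \]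
   Context: $\mathrm{Attn}(q,K,V)=\dfrac{\sum_i e^{q^Tk_i}v_i}{\sum_i e^{q^Tk_i}}$, sums over the key-value pairs in the collection. *)

From HB Require Import structures.
From mathcomp Require Import all_boot all_order all_algebra.
From mathcomp Require Import reals.
From mathcomp Require Import sequences.
From mathcomp.analysis Require Import exp.
Set Implicit Arguments. Unset Strict Implicit. Unset Printing Implicit Defensive.
Import Order.TTheory GRing.Theory Num.Theory.
Local Open Scope ring_scope.

Section Defs.
Variable R : realType.

Definition dotv (n : nat) (u v : 'rV[R]_n) : R := (u *m v^T) 0 0.
Definition norm2 (n : nat) (u : 'rV[R]_n) : R := Num.sqrt (dotv u u).

(* Attn(q, K, V) restricted to the sub-collection of pairs indexed by T:
   (sum_{i in T} e^{q.k_i} v_i) / (sum_{i in T} e^{q.k_i}).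
   (For T empty this is 0, since 0^-1 = 0 in MathComp.) *)
Definition attn (dk d n : nat) (q : 'rV[R]_dk) (K : 'I_n -> 'rV[R]_dk)
    (V : 'I_n -> 'rV[R]_d) (T : {set 'I_n}) : 'rV[R]_d :=
  (\sum_(i in T) expR (dotv q (K i)))^-1 *: \sum_(i in T) expR (dotv q (K i)) *: V i.

Definition packing_const (a : R) : Prop :=
  0 < a /\
  forall (eta : R) (dk m : nat), 0 < eta -> eta <= 2^-1 -> (0 < dk)%N ->
    m%:R <= expR (a * eta ^+ 2 * dk%:R) ->
    exists u : 'I_m -> 'rV[R]_dk,
      (forall i, norm2 (u i) = 1) /\
      (forall i h, i != h -> dotv (u i) (u h) <= eta).

Definition coreset_alg (d dk : nat) (rho eps p : R) (S : nat)
    (A : forall n : nat, ('I_n -> 'rV[R]_dk) -> ('I_n -> 'rV[R]_d) ->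
         {set 'I_n} -> R) : Prop :=
  forall (n : nat) (K : 'I_n -> 'rV[R]_dk) (V : 'I_n -> 'rV[R]_d),
    (forall i, norm2 (K i) <= 1 /\ norm2 (V i) <= 1) ->
    [/\ (forall T, 0 <= A n K V T),
        \sum_(T : {set 'I_n}) A n K V T = 1,
        (forall T, 0 < A n K V T -> (#|T| <= S)%N) &
        (forall q : 'rV[R]_dk, norm2 q <= rho ->
           p <= \sum_(T : {set 'I_n} |
                       norm2 (attn q K V setT - attn q K V T) <= eps) A n K V T)].

End Defs.

From HB Require Import structures.
From mathcomp Require Import all_boot all_order all_algebra.
From mathcomp Require Import reals.
From mathcomp Require Import sequences.
From mathcomp.analysis Require Import exp.
From mathcomp Require Import ring lra.

Set Implicit Arguments.
Unset Strict Implicit.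
Unset Printing Implicit Defensive.

Import Order.TTheory GRing.Theory Num.Theory.
Local Open Scope ring_scope.

(* Since coresets here are unweighted sub-collections, the bound
   [S >= c sqrt d L / eps] holds outright, which is more than the first branch
   of the minimum.  Take [d] heavy pairs
   [(e_1, e_j)], [N ~ sqrt d L / (2 eps)] light pairs [(0, 0)] and the query
   [rho e_1], so that heavy pairs get weight [L] and light ones weight [1].
   With [W = d L + N], the attention is [L / W] times the all-ones vector,
   while a sub-collection [T] of weight [W_T] yields [L / W_T] times the
   indicator of its heavy pairs.  Unless [0 < L / W_T < 2 L / W], every
   coordinate errs by at least [L / W], for a total error
   [sqrt d L / W > eps].  So a good coreset carries more than half of the
   weight, which forces about [N / 2 - d L] light pairs into it. *)

Section Vectors.
Variable R : realType.
Implicit Types (n : nat) (a : R).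

Lemma dotvE n (u v : 'rV[R]_n) : dotv u v = \sum_k u 0 k * v 0 k.
Proof. by rewrite /dotv mxE; apply: eq_bigr => k _; rewrite mxE. Qed.

Lemma dotvZl n a (u v : 'rV[R]_n) : dotv (a *: u) v = a * dotv u v.
Proof. by rewrite !dotvE mulr_sumr; apply: eq_bigr => k _; rewrite mxE mulrA. Qed.

Lemma dotvZr n a (u v : 'rV[R]_n) : dotv u (a *: v) = a * dotv u v.
Proof. by rewrite !dotvE mulr_sumr; apply: eq_bigr => k _; rewrite mxE mulrCA. Qed.

Lemma dotv0r n (u : 'rV[R]_n) : dotv u 0 = 0.
Proof. by rewrite dotvE big1 // => k _; rewrite mxE mulr0. Qed.

Lemma norm20 n : norm2 (0 : 'rV[R]_n) = 0.
Proof. by rewrite /norm2 dotv0r sqrtr0. Qed.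

Lemma norm2Z n a (u : 'rV[R]_n) : norm2 (a *: u) = `|a| * norm2 u.
Proof.
by rewrite /norm2 dotvZl dotvZr mulrA -expr2 sqrtrM ?sqr_ge0 // sqrtr_sqr.
Qed.

Lemma dotvv_le_sqr n (u : 'rV[R]_n) a :
  0 <= a -> norm2 u <= a -> dotv u u <= a ^+ 2.
Proof.
move=> a_ge0; rewrite /norm2 -{1}(ger0_norm a_ge0) -sqrtr_sqr.
by rewrite ler_sqrt // sqr_ge0.
Qed.

Definition unit_row n (k : nat) : 'rV[R]_n := \row_j ((j : nat) == k)%:R.

Lemma dotv_unit_row n k : dotv (unit_row n k) (unit_row n k) = (k < n)%:R.
Proof.
rewrite dotvE; under eq_bigr => j _ do rewrite !mxE -natrM mulnb andbb.
case: (ltnP k n) => [k_lt_n | n_le_k].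
  rewrite (bigD1 (Ordinal k_lt_n)) //= eqxx big1 ?addr0 // => j.
  by rewrite -val_eqE /= => /negbTE ->.
by rewrite big1 // => j _; rewrite ltn_eqF // (leq_trans (ltn_ord j) n_le_k).
Qed.

Lemma norm2_unit_row n k : norm2 (unit_row n k) = (k < n)%:R.
Proof. by rewrite /norm2 dotv_unit_row; case: (k < n)%N; rewrite ?sqrtr1 ?sqrtr0. Qed.

Lemma sum_sqr_dev_lt n (phi gam : R) (b : 'I_n -> bool) : 0 <= phi ->
  \sum_j (phi - gam * (b j)%:R) ^+ 2 < n%:R * phi ^+ 2 -> 0 < gam < 2 * phi.
Proof.
move=> phi_ge0; apply: contraTT => gam_out; rewrite -leNgt.
rewrite mulr_natl -{1}[n]card_ord -sumr_const; apply: ler_sum => j _.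
have [gam_le0 | gam_ge2phi] : gam <= 0 \/ 2 * phi <= gam.
  by move: gam_out; rewrite negb_and -!leNgt => /orP.
all: by case: (b j); rewrite ?mulr1 ?mulr0 ?subr0 //; nra.
Qed.

End Vectors.

Section HardInstance.
Variables (R : realType) (dk d N : nat).
Hypothesis dk_gt0 : (0 < dk)%N.

Definition hard_keys (i : 'I_(d + N)) : 'rV[R]_dk :=
  if (i < d)%N then unit_row R dk 0 else 0.

Definition hard_values (i : 'I_(d + N)) : 'rV[R]_d := unit_row R d i.

Definition hard_weight (L : R) (i : 'I_(d + N)) : R := if (i < d)%N then L else 1.

Definition hard_query (rho : R) : 'rV[R]_dk := rho *: unit_row R dk 0.

Lemma hard_pairs_normed i : norm2 (hard_keys i) <= 1 /\ norm2 (hard_values i) <= 1.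
Proof.
rewrite /hard_keys /hard_values norm2_unit_row.
by split; case: (i < d)%N; rewrite ?norm20 ?norm2_unit_row ?dk_gt0.
Qed.

Lemma norm2_hard_query rho : 0 <= rho -> norm2 (hard_query rho) = rho.
Proof. by move=> rho_ge0; rewrite norm2Z norm2_unit_row dk_gt0 mulr1 ger0_norm. Qed.

Lemma expR_hard_query rho i :
  expR (dotv (hard_query rho) (hard_keys i)) = hard_weight (expR rho) i.
Proof.
rewrite /hard_keys /hard_weight; case: (i < d)%N; last by rewrite dotv0r expR0.
by rewrite dotvZl dotv_unit_row dk_gt0 mulr1.
Qed.

Lemma hard_attnE rho T :
  attn (hard_query rho) hard_keys hard_values T =
  (expR rho / \sum_(i in T) hard_weight (expR rho) i) *: \row_j (lshift N j \in T)%:R.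
Proof.
apply/rowP => j; rewrite /attn !mxE summxE mulrAC mulrC.
under eq_bigr => i _ do rewrite !mxE expR_hard_query.
under [X in X^-1]eq_bigr => i _ do rewrite expR_hard_query.
congr (_ * _).
rewrite big_mkcond (bigD1 (lshift N j)) //= big1 ?addr0.
  rewrite /hard_weight /= ltn_ord eqxx.
  by case: (_ \in T); rewrite ?mulr1 ?mulr0.
move=> i; rewrite -val_eqE /= eq_sym => /negbTE ->.
by case: (i \in T); rewrite ?mulr0.
Qed.

Lemma sum_split_at (x y : R) :
  \sum_(i < d + N) (if (i < d)%N then x else y) = d%:R * x + N%:R * y.
Proof.
rewrite big_split_ord /=; under eq_bigr => i _ do rewrite ltn_ord.
under [X in _ + X]eq_bigr => i _ do rewrite ltnNge leq_addr /=.
by rewrite !sumr_const !card_ord !mulr_natl.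
Qed.

Lemma sum_hard_weight_setT (L : R) :
  \sum_(i in [set: 'I_(d + N)]) hard_weight L i = d%:R * L + N%:R.
Proof.
by rewrite (eq_bigl xpredT) => [|i]; rewrite ?in_setT // sum_split_at mulr1.
Qed.

Lemma sum_hard_weight_le (L : R) (T : {set 'I_(d + N)}) :
  1 <= L -> \sum_(i in T) hard_weight L i <= #|T|%:R + d%:R * L.
Proof.
move=> L_ge1; pose heavy (i : 'I_(d + N)) := if (i < d)%N then L else 0.
have heavy_ge0 i : 0 <= heavy i by rewrite /heavy; case: ifP; lra.
apply: (@le_trans _ _ (\sum_(i in T) (1 + heavy i))).
  by apply: ler_sum => i _; rewrite /hard_weight /heavy; case: ifP; lra.
rewrite big_split /= sumr_const lerD2l.
rewrite -[d%:R * L]addr0 -[0 in X in _ <= X](mulr0 N%:R) -sum_split_at.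
rewrite [X in _ <= X](bigID [in T]) /= lerDl.
by apply: sumr_ge0 => i _; apply: heavy_ge0.
Qed.

Lemma hard_coreset_weight_gt_half rho eps (T : {set 'I_(d + N)}) :
  (0 < d)%N -> let L := expR rho in
  eps * (d%:R * L + N%:R) < Num.sqrt d%:R * L ->
  norm2 (attn (hard_query rho) hard_keys hard_values setT
         - attn (hard_query rho) hard_keys hard_values T) <= eps ->
  d%:R * L + N%:R < 2 * \sum_(i in T) hard_weight L i.
Proof.
move=> d_gt0 L eps_small; set E := _ - _ => E_le_eps.
set W := d%:R * L + N%:R; set WT := \sum_(i in T) _.
have L_gt0 : 0 < L := expR_gt0 rho.
have eps_ge0 : 0 <= eps by apply: le_trans E_le_eps; apply: sqrtr_ge0.
have WT_ge0 : 0 <= WT.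
  by apply: sumr_ge0 => i _; rewrite /hard_weight; case: ifP => _; lra.
have W_gt0 : 0 < W by rewrite ltr_wpDr ?ler0n // mulr_gt0 ?ltr0n.
pose phi := L / W; pose gam := L / WT.
have phi_gt0 : 0 < phi by rewrite divr_gt0.
have E_coord j : E 0 j = phi - gam * (lshift N j \in T)%:R.
  by rewrite /E !hard_attnE sum_hard_weight_setT !mxE in_setT mulr1.
have eps_lt : eps < Num.sqrt d%:R * phi by rewrite /phi mulrA ltr_pdivlMr.
have sqrt_d_sqr : Num.sqrt d%:R ^+ 2 = d%:R :> R by rewrite sqr_sqrtr ?ler0n.
have /sum_sqr_dev_lt :
    \sum_j (phi - gam * (lshift N j \in T)%:R) ^+ 2 < d%:R * phi ^+ 2.
  under eq_bigr => j _ do rewrite -E_coord expr2.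
  rewrite -dotvE; apply: (le_lt_trans (dotvv_le_sqr eps_ge0 E_le_eps)).
  by rewrite -sqrt_d_sqr -exprMn ltrXn2r.
move=> /(_ (ltW phi_gt0)) /andP[gam_gt0 gam_lt_2phi].
have WT_gt0 : 0 < WT by move: gam_gt0; rewrite pmulr_rgt0 // invr_gt0.
have phiW : phi * W = L by rewrite mulrC mulrCA divff ?mulr1 ?gt_eqF.
have gamWT : gam * WT = L by rewrite mulrC mulrCA divff ?mulr1 ?gt_eqF.
rewrite -(ltr_pM2l phi_gt0); nra.
Qed.

End HardInstance.

Lemma hard_coreset_size (R : realType) (d dk N : nat) (rho eps p : R) S A :
  (0 < d)%N -> (0 < dk)%N -> 0 <= rho -> 0 < p ->
  @coreset_alg R d dk rho eps p S A ->
  eps * (d%:R * expR rho + N%:R) < Num.sqrt d%:R * expR rho ->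
  N%:R < 2 * S%:R + d%:R * expR rho.
Proof.
move=> d_gt0 dk_gt0 rho_ge0 p_gt0 coresetA eps_small.
have [A_ge0 _ A_size A_good] :=
  coresetA (d + N)%N (@hard_keys R dk d N) (@hard_values R d N)
    (@hard_pairs_normed R dk d N dk_gt0).
have := A_good (hard_query dk rho); rewrite norm2_hard_query // => /(_ (lexx _)).
move=> /(lt_le_trans p_gt0)/lt0r_neq0/eqP.
case/(psumr_neq0P (fun T _ => A_ge0 T)) => T /andP[T_good /A_size T_small].
have L_ge1 : 1 <= expR rho by apply: le_trans (expR_ge1Dx rho); lra.
have := hard_coreset_weight_gt_half dk_gt0 d_gt0 eps_small T_good.
have := sum_hard_weight_le T L_ge1.
have : #|T|%:R <= S%:R :> R by rewrite ler_nat.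
lra.
Qed.

Lemma coreset_size_ge (R : realType) (d dk : nat) (rho eps p : R) S A :
  (1 < d)%N -> (0 < dk)%N -> 0 <= rho -> 0 < p -> 0 < eps ->
  eps * Num.sqrt d%:R <= 16^-1 ->
  @coreset_alg R d dk rho eps p S A ->
  Num.sqrt d%:R * expR rho / eps <= 8 * S%:R.
Proof.
move=> d_gt1 dk_gt0 rho_ge0 p_gt0 eps_gt0 eps_le coresetA.
set s := Num.sqrt d%:R in eps_le *; set L := expR rho; set y := s * L / eps.
have s_sqr : s * s = d%:R by rewrite -expr2 sqr_sqrtr ?ler0n.
have L_ge1 : 1 <= L by apply: le_trans (expR_ge1Dx rho); lra.
have d_ge2 : 2 <= d%:R :> R by rewrite ler_nat.
have yeps : y * eps = s * L by rewrite mulfVK ?gt_eqF.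
have y_gt0 : 0 < y by rewrite divr_gt0 ?mulr_gt0 ?sqrtr_gt0 ?ltr0n ?(ltnW d_gt1) //; lra.
have dL_le : d%:R * L <= y / 16.
  have -> : d%:R * L = y * (eps * s) by rewrite -s_sqr mulrA yeps; ring.
  nra.
pose N := Num.truncn (y / 2).
have N_le : N%:R <= y / 2 by rewrite truncn_le; lra.
have N_gt : y / 2 < N%:R + 1 by rewrite natr1 truncnS_gt.
have dL_ge2 : 2 <= d%:R * L by nra.
have := @hard_coreset_size R d dk N rho eps p S A (ltnW d_gt1) dk_gt0 rho_ge0 p_gt0 coresetA.
rewrite -/L -/s.
have : eps * (d%:R * L + N%:R) <= 9 / 16 * (s * L).
  by rewrite -yeps; nra.
have : 0 < s * L by rewrite -yeps; nra.
lra.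
Qed.

Theorem theorem11 (R : realType) (a : R) :
  packing_const a ->
  forall p : R, 0 < p -> p <= 1 ->
  exists eps0 c : R, 0 < eps0 /\ 0 < c /\
    forall (d dk : nat), (1 < d)%N -> (1 < dk)%N ->
    forall rho eps : R, 2 <= rho -> 0 < eps -> eps <= eps0 / Num.sqrt d%:R ->
    forall (S : nat) A, @coreset_alg R d dk rho eps p S A ->
      let L := expR rho in
      c * d%:R * Num.min (Num.min (L / (eps * Num.sqrt d%:R)) (L ^+ 2))
                         (expR (a * dk%:R / (ln L) ^+ 2)) <= S%:R.
Proof.
move=> _ p p_gt0 _; exists 16^-1, 8^-1; split; first lra; split; first lra.
move=> d dk d_gt1 dk_gt1 rho eps rho_ge2 eps_gt0 eps_le S A coresetA.
cbv zeta; set L := expR rho.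
set s := Num.sqrt d%:R in eps_le *; set m := Num.min _ _.
have s_gt0 : 0 < s by rewrite sqrtr_gt0 ltr0n ltnW.
have rho_ge0 : 0 <= rho by lra.
have eps_s : eps * s <= 16^-1 by rewrite -ler_pdivlMr.
have := coreset_size_ge d_gt1 (ltnW dk_gt1) rho_ge0 p_gt0 eps_gt0 eps_s coresetA.
have m_le : m <= L / (eps * s) by rewrite !ge_min lexx.
have -> : s * L / eps = d%:R * (L / (eps * s)).
  by rewrite -[d%:R](sqr_sqrtr (ler0n R d)) -/s; field; rewrite ?gt_eqF.
have : d%:R * m <= d%:R * (L / (eps * s)) by rewrite ler_wpM2l ?ler0n.
lra.
Qed.
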